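(* For all integers $n\ge 1$, $k\ge 0$ and $c\ge k$ with $c\ge1$, $$\left\langle {n \atop k}\right\rangle_{\!c}=\left\langle {n \atop k}\right\rangle_{\!k}$$ (for $k=0$ both sides equal $1$, the right side being read as $\left\langle {n \atop 0}\right\rangle_{\!0}=1$).
   Context: A $c$-rook placement on an $n\times n$ board is a placement of $cn$ rooks on the cells, several rooks being allowed in the same cell, such that every row and every column contains exactly $c$ rooks (equivalently, an $n\times n$ matrix of nonnegative integers with all row and column sums equal to $c$). A drop is a rook lying strictly below the main diagonal, i.e.\ in a cell $(i,j)$ (row $i$, column $j$) with $i>j$, counted with multiplicity. The generalized Eulerian number $\left\langle {n \atop k}\right\rangle_{\!c}$ is the number of $c$-rook placements on the $n\times n$ board with exactly $k$ drops. *)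

From mathcomp Require Import all_boot.
Set Implicit Arguments. Unset Strict Implicit. Unset Printing Implicit Defensive.

(* A c-rook placement on the n x n board: an n x n matrix of nonnegative
   integers with all row and column sums equal to c.  Since every entry is
   bounded by its row sum c, entries are represented in 'I_c.+1 (this loses
   nothing: every such integer matrix has entries <= c). *)
Definition board (n c : nat) := {ffun 'I_n * 'I_n -> 'I_c.+1}.

Definition is_rook_placement (n c : nat) (A : board n c) : bool :=
  [forall i : 'I_n, \sum_(j < n) (A (i, j) : nat) == c] &&
  [forall j : 'I_n, \sum_(i < n) (A (i, j) : nat) == c].

Definition drops (n c : nat) (A : board n c) : nat :=
  \sum_(i < n) \sum_(j < n | j < i) (A (i, j) : nat).

Definition gen_euler (n k c : nat) : nat :=
  #|[set A : board n c | is_rook_placement A && (drops A == k)]|.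

From mathcomp Require Import all_boot zify.
Set Implicit Arguments. Unset Strict Implicit. Unset Printing Implicit Defensive.

(* In a c-rook placement with k drops every diagonal cell holds at least
   c - k rooks: cutting the board after row and column i, the rooks leaving
   the upper-left block to the right are as many as those leaving it
   downwards, and the latter are drops, so row i has at most k rooks off the
   diagonal.  Removing c - k rooks from every diagonal cell is therefore a
   bijection onto the k-rook placements with k drops (the inverse adds them
   back), and it does not touch the cells below the diagonal. *)

Lemma leq_sum_subpred (I : finType) (P Q : pred I) (F : I -> nat) :
  (forall i, P i -> Q i) -> \sum_(i | P i) F i <= \sum_(i | Q i) F i.
Proof. by move=> PQ; apply: (sub_le_big leqnn (fun x y => leq_addr y x)). Qed.

Definition lower_sum n (a : 'I_n -> 'I_n -> nat) : nat :=
  \sum_(i < n) \sum_(j < n | j < i) a i j.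

Section BalancedMatrix.

Variables (n : nat) (a : 'I_n -> 'I_n -> nat).
Hypothesis row_col_sum : forall i, \sum_(j < n) a i j = \sum_(j < n) a j i.

Lemma sum_block_transfer (P : pred 'I_n) :
  \sum_(r | P r) \sum_(j | ~~ P j) a r j = \sum_(r | ~~ P r) \sum_(j | P j) a r j.
Proof.
apply/(@addnI (\sum_(r | P r) \sum_(j | P j) a r j)).
have rows : \sum_(r | P r) \sum_(j | P j) a r j + \sum_(r | P r) \sum_(j | ~~ P j) a r j
    = \sum_(r | P r) \sum_(j < n) a r j.
  by rewrite -big_split; apply: eq_bigr => r _; rewrite [RHS](bigID P).
have cols : \sum_(r | P r) \sum_(j | P j) a r j + \sum_(r | ~~ P r) \sum_(j | P j) a r j
    = \sum_(j | P j) \sum_(r < n) a r j.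
  rewrite [X in X + _]exchange_big [X in _ + X]exchange_big -big_split /=.
  by apply: eq_bigr => r _; rewrite [RHS](bigID P).
by rewrite rows cols; apply: eq_bigr => r _; apply: row_col_sum.
Qed.

Lemma row_sum_le_diag_lower i : \sum_(j < n) a i j <= a i i + lower_sum a.
Proof.
pose P := fun r : 'I_n => r <= i.
have row : \sum_(j < n) a i j
    = a i i + \sum_(j < n | j < i) a i j + \sum_(j | ~~ P j) a i j.
  rewrite (bigD1 i) //= (bigID P) /= addnA; congr (_ + _ + _); apply: eq_bigl => j.
    by rewrite -val_eqE /= ltn_neqAle.
  by apply: andb_idl; rewrite -ltnNge -val_eqE /= => /gtn_eqF ->.
have right : \sum_(j | ~~ P j) a i j <= \sum_(r | P r) \sum_(j | ~~ P j) a r j.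
  by rewrite [X in _ <= X](bigD1 i) ?leq_addr /P.
have left : \sum_(j < n | j < i) a i j + \sum_(r | ~~ P r) \sum_(j | P j) a r j
    <= lower_sum a.
  rewrite /lower_sum [X in _ <= X](bigID P) /=; apply: leq_add.
    by rewrite [X in _ <= X](bigD1 i) ?leq_addr /P.
  apply: leq_sum => r; rewrite /P -ltnNge => ir.
  by apply: leq_sum_subpred => j ji; apply: leq_ltn_trans ir.
rewrite sum_block_transfer in right; rewrite row; lia.
Qed.

End BalancedMatrix.

Lemma rook_placementP n c (A : board n c) :
  reflect ((forall i, \sum_(j < n) (A (i, j) : nat) = c) /\
           (forall j, \sum_(i < n) (A (i, j) : nat) = c))
          (is_rook_placement A).
Proof.
apply: (iffP andP) => [[/forallP rows /forallP cols] | [rows cols]].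
  by split=> i; apply/eqP.
by split; apply/forallP => i; apply/eqP.
Qed.

Lemma sub_drops_le_diag n c (A : board n c) i :
  is_rook_placement A -> c - drops A <= A (i, i).
Proof.
case/rook_placementP => rows cols; rewrite leq_subLR addnC.
have := @row_sum_le_diag_lower n (fun r j => A (r, j)) _ i; rewrite rows.
by apply=> r; rewrite rows cols.
Qed.

Definition diag_part n (d : nat) (p : 'I_n * 'I_n) : nat :=
  if p.1 == p.2 then d else 0.

Lemma diag_part_lower n d (i j : 'I_n) : j < i -> diag_part d (i, j) = 0.
Proof. by move=> ji; rewrite /diag_part /= -val_eqE /= gtn_eqF. Qed.

Lemma sum_diag_part_row n d (i : 'I_n) : \sum_(j < n) diag_part d (i, j) = d.
Proof.
rewrite (bigD1 i) //= big1 => [|j /negPf ji]; last by rewrite /diag_part /= eq_sym ji.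
by rewrite /diag_part /= eqxx addn0.
Qed.

Lemma sum_diag_part_col n d (j : 'I_n) : \sum_(i < n) diag_part d (i, j) = d.
Proof.
rewrite (bigD1 j) //= big1 => [|i /negPf ij]; last by rewrite /diag_part /= ij.
by rewrite /diag_part /= eqxx addn0.
Qed.

Definition diag_add n k c (B : board n k) : board n c :=
  [ffun p => inord (B p + diag_part (c - k) p)].

Definition diag_sub n c k (A : board n c) : board n k :=
  [ffun p => inord (A p - diag_part (c - k) p)].

Section DiagonalShift.

Variables (n k c : nat).
Hypothesis k_le_c : k <= c.

Lemma diag_add_entry (B : board n k) p :
  diag_add c B p = B p + diag_part (c - k) p :> nat.
Proof.
rewrite ffunE inordK // ltnS /diag_part.
by have := ltn_ord (B p); case: (_ == _); lia.
Qed.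

Lemma diag_addK : cancel (@diag_add n k c) (@diag_sub n c k).
Proof.
move=> B; apply/ffunP => p; apply: val_inj.
by rewrite /= ffunE diag_add_entry addnK inordK.
Qed.

Lemma diag_add_placement (B : board n k) :
  is_rook_placement B -> is_rook_placement (diag_add c B).
Proof.
case/rook_placementP => rows cols; apply/rook_placementP.
by split=> i; under eq_bigr do rewrite diag_add_entry;
  rewrite big_split /= ?rows ?cols ?sum_diag_part_row ?sum_diag_part_col subnKC.
Qed.

Lemma drops_diag_add (B : board n k) : drops (diag_add c B) = drops B.
Proof.
apply: eq_bigr => i _; apply: eq_bigr => j ji.
by rewrite diag_add_entry diag_part_lower ?addn0.
Qed.

Section FewDrops.

Variable A : board n c.
Hypotheses (A_placement : is_rook_placement A) (A_drops : drops A <= k).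

Lemma diag_part_le_entry p : diag_part (c - k) p <= A p.
Proof.
case: p => i j; rewrite /diag_part /=; case: eqP => [<-|_] //.
by apply: leq_trans (sub_drops_le_diag i A_placement); apply: leq_sub2l.
Qed.

Lemma sum_diag_sub_row i :
  \sum_(j < n) ((A (i, j) : nat) - diag_part (c - k) (i, j)) = k.
Proof.
have [rows _] := rook_placementP _ A_placement.
by rewrite sumnB => [|j _]; rewrite ?rows ?sum_diag_part_row ?subKn ?diag_part_le_entry.
Qed.

Lemma sum_diag_sub_col j :
  \sum_(i < n) ((A (i, j) : nat) - diag_part (c - k) (i, j)) = k.
Proof.
have [_ cols] := rook_placementP _ A_placement.
by rewrite sumnB => [|i _]; rewrite ?cols ?sum_diag_part_col ?subKn ?diag_part_le_entry.
Qed.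

Lemma diag_sub_entry p : diag_sub k A p = A p - diag_part (c - k) p :> nat.
Proof.
case: p => i j; rewrite ffunE inordK // ltnS -[X in _ <= X](sum_diag_sub_row i).
by rewrite (bigD1 j) ?leq_addr.
Qed.

Lemma diag_subK : diag_add c (diag_sub k A) = A.
Proof.
apply/ffunP => p; apply: val_inj.
by rewrite /= diag_add_entry diag_sub_entry subnK ?diag_part_le_entry.
Qed.

Lemma diag_sub_placement : is_rook_placement (diag_sub k A).
Proof.
apply/rook_placementP; split=> i; under eq_bigr do rewrite diag_sub_entry.
  exact: sum_diag_sub_row.
exact: sum_diag_sub_col.
Qed.

Lemma drops_diag_sub : drops (diag_sub k A) = drops A.
Proof.
apply: eq_bigr => i _; apply: eq_bigr => j ji.
by rewrite diag_sub_entry diag_part_lower ?subn0.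
Qed.

End FewDrops.

End DiagonalShift.

Theorem lemma5p1 (n k c : nat) :
  1 <= n -> k <= c -> 1 <= c -> gen_euler n k c = gen_euler n k k.
Proof.
move=> _ k_le_c _; rewrite /gen_euler.
rewrite -(card_imset _ (can_inj (diag_addK k_le_c))); apply: eq_card => A.
rewrite inE; apply/idP/imsetP => [/andP [HA /eqP DA] | [B]].
  have DAk : drops A <= k by rewrite DA.
  exists (diag_sub k A); last by rewrite diag_subK.
  by rewrite inE diag_sub_placement // (drops_diag_sub k_le_c HA DAk) DA eqxx.
rewrite inE => /andP [HB /eqP DB] ->.
by rewrite diag_add_placement // (drops_diag_add k_le_c) DB eqxx.
Qed.
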